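(* Let $m\ge 1$, $P,Q\ge 0$ be integers with $N=P+Q\ge1$, let $D$, $F_1,\ldots,F_m$, $\mathcal{E}$, $d$ and $G_F:\mathcal{E}\to\mathcal{E}$ be as described in the context, and assume that the state network of $G_F$ is strongly connected. Then $G_F$ is chaotic in the sense of Devaney on $(\mathcal{E},d)$: it is topologically transitive, its periodic points are dense in $\mathcal{E}$, and it has sensitive dependence on initial conditions (there is $\delta>0$ such that for every $E\in\mathcal{E}$ and every $\varepsilon>0$ there exist $E'\in\mathcal{E}$ with $d(E,E')<\varepsilon$ and $n\ge0$ with $d(G_F^n(E),G_F^n(E'))>\delta$).
   Context: Let $D=\{k\,2^{-Q}: k=0,1,\ldots,2^N-1\}$ be the set of $N$-bit fixed-point numbers; each $x\in D$ is written in binary as $x=x_{P-1}x_{P-2}\ldots x_0.x_{-1}\ldots x_{-Q}$ with digits $x_j\in\{0,1\}$. For $x,y\in D$ let $x\cdot y$, $x+y$ and $\overline{x}$ denote bitwise AND, bitwise OR and bitwise NOT (complement of every one of the $N$ digits), which are again elements of $D$. Let $F_1,\ldots,F_m:D^m\to D$ be arbitrary functions. Let $\Sigma$ be the set of one-sided infinite sequences $w=w^1w^2\ldots$ with $w^k\in D$, and $\sigma:\Sigma\to\Sigma$ the left shift $\sigma(w)=w^2w^3\ldots$. Let $\mathcal{E}=\Sigma^m\times D^m$, with elements $E=((w_1,\ldots,w_m),(x_1,\ldots,x_m))$. Define $G_F:\mathcal{E}\to\mathcal{E}$ by $G_F((w_1,\ldots,w_m),x)=((\sigma(w_1),\ldots,\sigma(w_m)),(H_1,\ldots,H_m))$,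 where $x=(x_1,\ldots,x_m)$ and $H_i=(x_i\cdot\overline{w_i^1})+(F_i(x)\cdot w_i^1)$ (i.e. bit $j$ of $x_i$ is replaced by bit $j$ of $F_i(x)$ exactly when bit $j$ of $w_i^1$ is $1$). The metric on $\mathcal{E}$ is $d(E,\hat E)=\sum_{i=1}^m\sum_{k=1}^\infty \frac{|w_i^k-\hat w_i^k|}{2^{Nk}}+\sqrt{\sum_{i=1}^m (x_i-\hat x_i)^2}$. The state network of $G_F$ is the directed graph whose vertex set is $D^m$, with an edge from $\hat x$ to $\tilde x$ whenever there is some $(w_1,\ldots,w_m)\in\Sigma^m$ such that the $D^m$-component of $G_F((w_1,\ldots,w_m),\hat x)$ equals $\tilde x$. It is strongly connected if every vertex is reachable from every other vertex by a directed path. *)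

From Stdlib Require Import Reals Relations.
From Coquelicot Require Import Coquelicot.
From mathcomp Require Import all_boot.

Set Implicit Arguments.
Unset Strict Implicit.

(* An N-bit fixed-point number (N = P + Q) given by its binary digits:
   digit j : 'I_(P+Q) is the digit of weight 2^(j - Q), i.e. digit x_{j-Q}
   in the notation x_{P-1} ... x_0 . x_{-1} ... x_{-Q}. *)
Definition FixPt (P Q : nat) := {ffun 'I_(P + Q) -> bool}.

Definition Dval (P Q : nat) (x : FixPt P Q) : R :=
  \big[Rplus/R0]_(j < P + Q)
     (if x j then powerRZ 2 (Z.of_nat (nat_of_ord j) - Z.of_nat Q) else R0).

Definition dand P Q (x y : FixPt P Q) : FixPt P Q := [ffun j => x j && y j].
Definition dor  P Q (x y : FixPt P Q) : FixPt P Q := [ffun j => x j || y j].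
Definition dnot P Q (x : FixPt P Q) : FixPt P Q := [ffun j => ~~ x j].

(* Sigma: one-sided sequences w = w^1 w^2 ...; w n stands for w^(n+1). *)
Definition Seq P Q := nat -> FixPt P Q.
Definition shift P Q (w : Seq P Q) : Seq P Q := fun n => w (S n).

Definition Phase (m P Q : nat) := (('I_m -> Seq P Q) * ('I_m -> FixPt P Q))%type.

Definition GF (m P Q : nat) (F : 'I_m -> ('I_m -> FixPt P Q) -> FixPt P Q)
  (E : Phase m P Q) : Phase m P Q :=
  let (w, x) := E in
  (fun i => shift (w i),
   fun i => dor (dand (x i) (dnot (w i 0%nat))) (dand (F i x) (w i 0%nat))).

Definition dE (m P Q : nat) (E E' : Phase m P Q) : R :=
  let (w, x) := E in let (w', x') := E' in
  (\big[Rplus/R0]_(i < m)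
      Series (fun n => Rabs (Dval (w i n) - Dval (w' i n)) / 2 ^ ((P + Q) * (S n))%nat))
  + sqrt (\big[Rplus/R0]_(i < m) (Dval (x i) - Dval (x' i)) ^ 2).

Definition sn_edge (m P Q : nat) (F : 'I_m -> ('I_m -> FixPt P Q) -> FixPt P Q)
  (xh xt : 'I_m -> FixPt P Q) : Prop :=
  exists w : 'I_m -> Seq P Q, snd (GF F (w, xh)) = xt.

Definition strongly_connected (m P Q : nat) (F : 'I_m -> ('I_m -> FixPt P Q) -> FixPt P Q) :=
  forall a b : 'I_m -> FixPt P Q, clos_refl_trans _ (sn_edge F) a b.

Definition d_open (X : Type) (d : X -> X -> R) (U : X -> Prop) : Prop :=
  forall x, U x -> exists eps, Rlt R0 eps /\ forall y, (Rlt (d x y) eps) -> U y.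

Definition top_transitive (X : Type) (d : X -> X -> R) (f : X -> X) : Prop :=
  forall U V : X -> Prop, d_open d U -> d_open d V ->
    (exists x, U x) -> (exists y, V y) ->
    exists k, (1 <= k)%nat /\ exists x, U x /\ V (Nat.iter k f x).

Definition periodic_point (X : Type) (f : X -> X) (x : X) : Prop :=
  exists n, (1 <= n)%nat /\ Nat.iter n f x = x.

Definition dense_periodic (X : Type) (d : X -> X -> R) (f : X -> X) : Prop :=
  forall x eps, Rlt R0 eps -> exists y, periodic_point f y /\ (Rlt (d x y) eps).

Definition sensitive (X : Type) (d : X -> X -> R) (f : X -> X) : Prop :=
  exists delta, Rlt R0 delta /\
    forall x eps, Rlt R0 eps -> exists y n,
      (Rlt (d x y) eps) /\ Rgt (d (Nat.iter n f x) (Nat.iter n f y)) delta.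

Definition devaney_chaotic (X : Type) (d : X -> X -> R) (f : X -> X) : Prop :=
  top_transitive d f /\ dense_periodic d f /\ sensitive d f.

(* The metric weights the k-th symbol of each strategy by 2^(-N(k+1)), so two
   phase points with the same state whose strategies agree on a long prefix
   are close.  Strong connectivity of the state network lets one append to
   any such prefix a finite strategy steering the state anywhere: appending
   then the strategy of a target point gives transitivity, while steering
   back to the initial state and repeating the whole prefix forever gives a
   periodic point.  Finally, replacing one far-away symbol of a strategy by a
   fixed-point number at distance at least half the diameter of D keeps the
   point close, yet after that many steps the leading symbols differ by that
   much: sensitivity. *)
From HB Require Import structures.
From Stdlib Require Import Reals Lra Lia Relations FunctionalExtensionality.
From Coquelicot Require Import Coquelicot.
From mathcomp Require Import all_boot zify.

Set Implicit Arguments.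
Unset Strict Implicit.

HB.instance Definition _ := Monoid.isComLaw.Build R R0 Rplus
  (fun a b c => esym (Rplus_assoc a b c)) Rplus_comm Rplus_0_l.

Open Scope R_scope.

Lemma bigR_ge_term (n : nat) (f : 'I_n -> R) (i0 : 'I_n) :
  (forall i, 0 <= f i) -> f i0 <= \big[Rplus/R0]_(i < n) f i.
Proof.
move=> f_ge0; rewrite (bigD1 i0) //.
rewrite -[X in X <= _]Rplus_0_r; apply: Rplus_le_compat_l.
by apply: big_ind => [|a b|i _]; [apply: Rle_refl | apply: Rplus_le_le_0_compat | apply: f_ge0].
Qed.

Lemma bigR_le_const (n : nat) (f : 'I_n -> R) (c : R) :
  (forall i, f i <= c) -> \big[Rplus/R0]_(i < n) f i <= INR n * c.
Proof.
elim: n f => [|n IH] f f_le; first by rewrite big_ord0 /=; lra.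
rewrite S_INR big_ord_recr.
apply: Rle_trans (Rplus_le_compat _ _ _ _ (IH _ (fun i => f_le _)) (f_le ord_max)) _.
lra.
Qed.

Lemma Series_ge0 (t : nat -> R) : (forall n, 0 <= t n) -> ex_series t -> 0 <= Series t.
Proof.
move=> t_ge0 t_sum; have -> : 0 = Series (fun n => 0 * t n) by rewrite Series_scal_l; ring.
by apply: Series_le => // n; have := t_ge0 n; lra.
Qed.

Lemma Series_ge_head (t : nat -> R) :
  (forall n, 0 <= t n) -> ex_series t -> t O <= Series t.
Proof.
move=> t_ge0 t_sum; rewrite Series_incr_1 //.
have := Series_ge0 (fun n => t_ge0 (S n)) (proj1 (ex_series_incr_1 t) t_sum).
lra.
Qed.

Lemma Series_le_geom_tail (t : nat -> R) (B : R) (K : nat) :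
  (forall n, 0 <= t n <= B * (/2) ^ S n) -> (forall n, (n < K)%N -> t n = 0) ->
  Series t <= 2 * (B * (/2) ^ S K).
Proof.
move=> t_bound t_prefix.
rewrite (Series_incr_n_aux t K); last by move=> k /ltP; apply: t_prefix.
have half_lt1 : Rabs (/2) < 1 by rewrite Rabs_pos_eq; lra.
have -> : 2 * (B * (/2) ^ S K) = Series (fun k => B * (/2) ^ S K * (/2) ^ k).
  rewrite Series_scal_l (is_series_unique _ _ (is_series_geom _ half_lt1)); field.
apply: Series_le; last by eexists; apply: is_series_scal_l; apply: is_series_geom.
move=> k; have := t_bound (K + k)%coq_nat.
by rewrite (_ : S (K + k)%coq_nat = (S K + k)%coq_nat) ?pow_add; [lra | lia].
Qed.

Section FixedPointNumbers.
Variables P Q : nat.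
Hypothesis N_gt0 : (1 <= P + Q)%N.

Definition ones : FixPt P Q := [ffun _ => true].
Definition zeros : FixPt P Q := [ffun _ => false].

Lemma Dval_bounds (x : FixPt P Q) : 0 <= Dval x <= Dval ones.
Proof.
apply: (big_ind2 (fun a b => 0 <= a <= b)) => [|a b c d|j _]; try lra.
rewrite /ones ffunE; have := powerRZ_lt 2 (Z.of_nat j - Z.of_nat Q) ltac:(lra).
by case: (x j); lra.
Qed.

Lemma Dval_zeros : Dval zeros = 0.
Proof. by rewrite /Dval big1 // => j _; rewrite ffunE. Qed.

Lemma Dval_ones_gt0 : 0 < Dval ones.
Proof.
rewrite /Dval (bigD1 (Ordinal N_gt0)) //= ffunE.
apply: Rplus_lt_le_0_compat; first by apply: powerRZ_lt; lra.
apply: big_ind => [|a b|j _]; try lra.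
by rewrite ffunE; apply/Rlt_le/powerRZ_lt; lra.
Qed.

Lemma Dval_dist_le (a b : FixPt P Q) : Rabs (Dval a - Dval b) <= Dval ones.
Proof. by have := Dval_bounds a; have := Dval_bounds b; move=> *; apply: Rabs_le; lra. Qed.

Lemma exists_far_fixpoint (a : FixPt P Q) :
  exists b : FixPt P Q, Dval ones / 2 <= Rabs (Dval a - Dval b).
Proof.
have [_ a_le] := Dval_bounds a.
case: (Rle_dec (Dval a) (Dval ones / 2)) => a_half.
  by exists ones; rewrite -Rabs_Ropp; apply: Rle_trans (Rle_abs _); lra.
by exists zeros; rewrite Dval_zeros; apply: Rle_trans (Rle_abs _); lra.
Qed.

Definition seq_dist (v v' : Seq P Q) : R :=
  Series (fun n => Rabs (Dval (v n) - Dval (v' n)) / 2 ^ ((P + Q) * S n)%N).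

Lemma seq_dist_term_bound (v v' : Seq P Q) (n : nat) :
  0 <= Rabs (Dval (v n) - Dval (v' n)) / 2 ^ ((P + Q) * S n)%N
    <= Dval ones * (/2) ^ S n.
Proof.
have pow_le : 2 ^ S n <= 2 ^ ((P + Q) * S n)%N.
  by apply: Rle_pow; [lra | apply/leP; apply: leq_pmull].
have pow_gt0 : 0 < 2 ^ S n by apply: pow_lt; lra.
rewrite pow_inv /Rdiv; split.
  by apply: Rmult_le_pos; [apply: Rabs_pos | apply/Rlt_le/Rinv_0_lt_compat; lra].
apply: Rmult_le_compat; [exact: Rabs_pos | apply/Rlt_le/Rinv_0_lt_compat; lra |
  exact: Dval_dist_le | exact: Rinv_le_contravar].
Qed.

Lemma ex_series_seq_dist (v v' : Seq P Q) :
  ex_series (fun n => Rabs (Dval (v n) - Dval (v' n)) / 2 ^ ((P + Q) * S n)%N).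
Proof.
have half_lt1 : Rabs (/2) < 1 by rewrite Rabs_pos_eq; lra.
apply: (ex_series_le _ (fun n => Dval ones / 2 * (/2) ^ n)).
  move=> n; have [t_ge0 t_le] := seq_dist_term_bound v v' n.
  by rewrite /norm /= /abs /= Rabs_pos_eq //; move: t_le => /=; rewrite -Rmult_assoc.
by eexists; apply: is_series_scal_l; apply: is_series_geom.
Qed.

Lemma seq_dist_ge_head (v v' : Seq P Q) :
  Rabs (Dval (v O) - Dval (v' O)) / 2 ^ (P + Q) <= seq_dist v v'.
Proof.
rewrite -[X in _ / 2 ^ X]muln1.
apply: (Series_ge_head (fun n => proj1 (seq_dist_term_bound v v' n))).
exact: ex_series_seq_dist.
Qed.

Lemma seq_dist_prefix_le (v v' : Seq P Q) (K : nat) :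
  (forall k, (k < K)%N -> v k = v' k) -> seq_dist v v' <= 2 * (Dval ones * (/2) ^ S K).
Proof.
move=> prefix; apply: Series_le_geom_tail => [n|n ltnK]; first exact: seq_dist_term_bound.
by rewrite prefix // Rminus_diag_eq // Rabs_R0 /Rdiv Rmult_0_l.
Qed.

End FixedPointNumbers.

Section PhaseSpace.
Variables m P Q : nat.
Hypothesis N_gt0 : (1 <= P + Q)%N.

Definition agree_upto (K : nat) (w w' : 'I_m -> Seq P Q) :=
  forall i k, (k < K)%N -> w i k = w' i k.

Lemma dE_pair (w w' : 'I_m -> Seq P Q) (x x' : 'I_m -> FixPt P Q) :
  dE (w, x) (w', x') = \big[Rplus/R0]_(i < m) seq_dist (w i) (w' i)
    + sqrt (\big[Rplus/R0]_(i < m) (Dval (x i) - Dval (x' i)) ^ 2).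
Proof. by []. Qed.

Lemma dE_same_state (w w' : 'I_m -> Seq P Q) (x : 'I_m -> FixPt P Q) :
  dE (w, x) (w', x) = \big[Rplus/R0]_(i < m) seq_dist (w i) (w' i).
Proof.
rewrite dE_pair [X in sqrt X]big1 => [|i _]; last by rewrite Rminus_diag_eq //; ring.
by rewrite sqrt_0 Rplus_0_r.
Qed.

Lemma seq_dist_le_dE (w w' : 'I_m -> Seq P Q) (x x' : 'I_m -> FixPt P Q) (i : 'I_m) :
  seq_dist (w i) (w' i) <= dE (w, x) (w', x').
Proof.
have := sqrt_pos (\big[Rplus/R0]_(i < m) (Dval (x i) - Dval (x' i)) ^ 2).
suff : seq_dist (w i) (w' i) <= \big[Rplus/R0]_(i < m) seq_dist (w i) (w' i).
  by rewrite dE_pair; lra.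
apply: bigR_ge_term => j.
apply: (Series_ge0 (fun n => proj1 (seq_dist_term_bound N_gt0 (w j) (w' j) n))).
exact: ex_series_seq_dist.
Qed.

Lemma dE_agree_upto_small (eps : R) : 0 < eps ->
  exists K, (1 <= K)%N /\ forall (w w' : 'I_m -> Seq P Q) x,
    agree_upto K w w' -> dE (w, x) (w', x) < eps.
Proof.
move=> eps_gt0; set B := Dval (@ones P Q).
have B_ge0 : 0 <= B by case: (Dval_bounds (@ones P Q)).
set C := 2 * INR m * B.
have C_ge0 : 0 <= C by have := pos_INR m; rewrite /C; nra.
have half_lt1 : Rabs (/2) < 1 by rewrite Rabs_pos_eq; lra.
have [K0 K0_small] := pow_lt_1_zero _ half_lt1 (eps / (C + 1))
  ltac:(apply: Rdiv_lt_0_compat; lra).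
exists (S K0); split => // w w' x agree; rewrite dE_same_state.
set p := (/2) ^ S (S K0).
apply: (Rle_lt_trans _ (C * p)).
  rewrite (_ : C * p = INR m * (2 * (B * p))); last by rewrite /C; ring.
  by apply: bigR_le_const => i; apply: seq_dist_prefix_le => // k /agree.
have p_gt0 : 0 < p by apply: pow_lt; lra.
have := K0_small (S (S K0)) ltac:(lia); rewrite Rabs_pos_eq -/p; last lra.
move=> p_small; have : (C + 1) * p < (C + 1) * (eps / (C + 1)).
  by apply: Rmult_lt_compat_l; lra.
by rewrite (_ : (C + 1) * (eps / (C + 1)) = eps); [nra | field; lra].
Qed.

End PhaseSpace.

Section Dynamics.
Variables m P Q : nat.
Variable F : 'I_m -> ('I_m -> FixPt P Q) -> FixPt P Q.

Definition update (x s : 'I_m -> FixPt P Q) : 'I_m -> FixPt P Q :=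
  fun i => dor (dand (x i) (dnot (s i))) (dand (F i x) (s i)).

Fixpoint traj (w : 'I_m -> Seq P Q) (x : 'I_m -> FixPt P Q) (n : nat) :=
  if n is n.+1 then update (traj w x n) (fun i => w i n) else x.

Definition wshift (n : nat) (w : 'I_m -> Seq P Q) : 'I_m -> Seq P Q :=
  fun i k => w i (n + k)%N.

Definition wcat (K : nat) (w w' : 'I_m -> Seq P Q) : 'I_m -> Seq P Q :=
  fun i k => if (k < K)%N then w i k else w' i (k - K)%N.

Definition wperiodic (p : nat) (w : 'I_m -> Seq P Q) : 'I_m -> Seq P Q :=
  fun i k => w i (k %% p)%N.

Lemma strategy_ext (w w' : 'I_m -> Seq P Q) :
  (forall i k, w i k = w' i k) -> w = w'.
Proof.
move=> eq_ww'; apply: functional_extensionality => i.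
exact: functional_extensionality (eq_ww' i).
Qed.

Lemma iter_GF (n : nat) w x :
  Nat.iter n (GF F) (w, x) = (wshift n w, traj w x n).
Proof.
elim: n => [|n /= ->]; first by congr pair; apply: strategy_ext.
congr pair; first by apply: strategy_ext => i k; rewrite /shift /wshift addnS.
by apply: functional_extensionality => i; rewrite /wshift addn0.
Qed.

Lemma traj_agree_upto (n : nat) w w' x :
  agree_upto n w w' -> traj w x n = traj w' x n.
Proof.
elim: n => [//|n IH] agree /=.
rewrite IH => [|i k lt_kn]; last exact/agree/ltnW.
by congr update; apply: functional_extensionality => i; apply: agree.
Qed.

Lemma traj_add (a b : nat) w x : traj w x (a + b) = traj (wshift a w) (traj w x a) b.
Proof. by elim: b => [|b /= <-]; rewrite ?addn0 ?addnS. Qed.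

Lemma agree_upto_wcat (K : nat) w w' : agree_upto K (wcat K w w') w.
Proof. by move=> i k lt_kK; rewrite /wcat lt_kK. Qed.

Lemma wshift_wcat (K : nat) w w' : wshift K (wcat K w w') = w'.
Proof.
by apply: strategy_ext => i k; rewrite /wshift /wcat ltnNge leq_addr addKn.
Qed.

Lemma traj_wcat (K n : nat) w w' x :
  traj (wcat K w w') x (K + n) = traj w' (traj w x K) n.
Proof. by rewrite traj_add wshift_wcat (traj_agree_upto _ (agree_upto_wcat w w')). Qed.

Lemma wshift_wperiodic (p : nat) w : wshift p (wperiodic p w) = wperiodic p w.
Proof. by apply: strategy_ext => i k; rewrite /wshift /wperiodic modnDl. Qed.

Lemma agree_upto_wperiodic (p : nat) w : agree_upto p (wperiodic p w) w.
Proof. by move=> i k lt_kp; rewrite /wperiodic modn_small. Qed.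

Lemma clos_rt_traj (a b : 'I_m -> FixPt P Q) :
  clos_refl_trans _ (sn_edge F) a b -> exists L w, traj w a L = b.
Proof.
elim=> {a b} [a b [w <-]|a|a b c _ [L1 [w1 <-]] _ [L2 [w2 <-]]].
- by exists 1%N, w.
- by exists 0%N, (fun i _ => a i).
- by exists (L1 + L2)%N, (wcat L1 w1 w2); rewrite traj_wcat.
Qed.

Lemma exists_steering (K : nat) w x y :
  strongly_connected F ->
  exists L w', agree_upto K w' w /\ traj w' x (K + L) = y.
Proof.
move=> connected; have [L [s <-]] := clos_rt_traj (connected (traj w x K) y).
by exists L, (wcat K w s); split; [apply: agree_upto_wcat | apply: traj_wcat].
Qed.

End Dynamics.

Section Chaos.
Variables m P Q : nat.
Variable F : 'I_m -> ('I_m -> FixPt P Q) -> FixPt P Q.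
Hypothesis N_gt0 : (1 <= P + Q)%N.
Hypothesis connected : strongly_connected F.

Lemma GF_transitive : top_transitive (@dE m P Q) (GF F).
Proof.
move=> U V U_open _ [[w x] Uwx] [[w' x'] Vwx'].
have [eps [eps_gt0 ball_U]] := U_open _ Uwx.
have [K [K_gt0 small]] := dE_agree_upto_small m N_gt0 eps_gt0.
have [L [w1 [agree steer]]] := exists_steering K w x x' connected.
exists (K + L)%N; split; first lia.
exists (wcat (K + L) w1 w', x); split.
  apply/ball_U/small => i k lt_kK.
  by rewrite agree_upto_wcat ?agree //; lia.
by rewrite iter_GF wshift_wcat (traj_agree_upto F _ (agree_upto_wcat w1 w')) steer.
Qed.

Lemma GF_dense_periodic : dense_periodic (@dE m P Q) (GF F).
Proof.
move=> [w x] eps eps_gt0.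
have [K [K_gt0 small]] := dE_agree_upto_small m N_gt0 eps_gt0.
have [L [w1 [agree loop]]] := exists_steering K w x x connected.
exists (wperiodic (K + L)%N w1, x); split.
  exists (K + L)%N; split; first lia.
  rewrite iter_GF wshift_wperiodic.
  by rewrite (traj_agree_upto F _ (agree_upto_wperiodic w1)) loop.
apply: small => i k lt_kK.
by rewrite agree_upto_wperiodic ?agree //; lia.
Qed.

Hypothesis m_gt0 : (1 <= m)%N.

Lemma GF_sensitive : sensitive (@dE m P Q) (GF F).
Proof.
set c := Dval (ones P Q).
have c_gt0 : 0 < c by apply: Dval_ones_gt0.
have T_gt0 : 0 < 2 ^ (P + Q) by apply: pow_lt; lra.
exists (c / (4 * 2 ^ (P + Q))); split; first by apply: Rdiv_lt_0_compat; lra.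
move=> [w x] eps eps_gt0.
have [K [_ small]] := dE_agree_upto_small m N_gt0 eps_gt0.
set i0 : 'I_m := Ordinal m_gt0.
have [b far] := exists_far_fixpoint (w i0 K).
set w' := fun i k => if (i == i0) && (k == K) then b else w i k.
have agree : agree_upto K w w'.
  by move=> i k lt_kK; rewrite /w' (ltn_eqF lt_kK) andbF.
exists (w', x), K; split; first exact: small.
rewrite !iter_GF (traj_agree_upto F _ agree).
apply: Rlt_le_trans (seq_dist_le_dE N_gt0 _ _ _ _ i0).
apply: Rlt_le_trans (seq_dist_ge_head N_gt0 _ _).
rewrite /wshift addn0 /w' !eqxx /=.
apply: (Rlt_le_trans _ (c / 2 / 2 ^ (P + Q))).
  have -> : c / (4 * 2 ^ (P + Q)) = c / 2 / 2 ^ (P + Q) / 2 by field; lra.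
  suff : 0 < c / 2 / 2 ^ (P + Q) by lra.
  by apply: Rdiv_lt_0_compat; lra.
by apply: Rmult_le_compat_r => //; apply/Rlt_le/Rinv_0_lt_compat.
Qed.

End Chaos.

Theorem mainTheorem4 (m P Q : nat) (F : 'I_m -> ('I_m -> FixPt P Q) -> FixPt P Q) :
  (1 <= m)%nat -> (1 <= P + Q)%nat -> strongly_connected F ->
  devaney_chaotic (@dE m P Q) (GF F).
Proof.
move=> m_gt0 N_gt0 connected.
split; first exact: GF_transitive.
by split; [exact: GF_dense_periodic | exact: GF_sensitive].
Qed.
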